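(* Let $(\vec s_i)_{i\in\mathbb N}$ be a strictly increasing sequence of oriented separations of a graph $G$ and $(P_i)_{i\in\mathbb N}$ a sequence of pre-tangles in $G$. Suppose that (IM1) $\overleftarrow{s}_i\in P_i$ and $\vec s_i\in P_{i+1}$ for all $i$, and (IM2') the separation $s_i$ efficiently distinguishes $P_i$ and $P_{i+1}$ for all $i$. Then (IM2) holds: for all $i<j$, every separation of minimal order among $s_i,\dots,s_{j-1}$ efficiently distinguishes $P_i$ and $P_j$.
   Context: Notation: $s$ denotes a separation (an unordered pair $\{A,B\}$ of subsets of $V(G)$ with $A\cup B=V(G)$ and no edge between $A\setminus B$ and $B\setminus A$; order $|s|=|A\cap B|$), $\vec s$ and $\overleftarrow{s}$ its two orientations $(A,B)$, $(B,A)$; oriented separations are ordered by $(A,B)\le(C,D)$ iff $A\subseteq C$ and $B\supseteq D$. A set $O$ of oriented separations is consistent if there are no $(A,B),(C,D)\in O$ with $\{A,B\}\ne\{C,D\}$ and $(B,A)\le(C,D)$. A pre-tangle is a consistent set $P$ which, for some $k\in\mathbb N\cup\{\aleph_0\}$, contains exactly one orientation of every separation of order $<k$ and nothing else. A separation distinguishes two pre-tangles if both contain an orientation of it but different ones; efficiently if it has minimum order among all separations distinguishing them. *)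

From Stdlib Require Import List Arith.
Set Implicit Arguments.

Section Seps.
Variable V : Type.
Variable E : V -> V -> Prop.

Definition osep := ((V -> Prop) * (V -> Prop))%type.

Definition flip (s : osep) : osep := (snd s, fst s).

Definition is_sep (s : osep) : Prop :=
  (forall v, fst s v \/ snd s v) /\
  (forall u v, fst s u -> ~ snd s u -> snd s v -> ~ fst s v -> ~ E u v).

Definition same_sep (s t : osep) : Prop := t = s \/ t = flip s.

(* Order of separations as cardinals: |A ∩ B| <= |C ∩ D| (injection). *)
Definition order_le (s t : osep) : Prop :=
  exists f : {v | fst s v /\ snd s v} -> {v | fst t v /\ snd t v},
    forall x y, f x = f y -> x = y.

Definition has_order (s : osep) (n : nat) : Prop :=
  exists l : list V, NoDup l /\ length l = n /\
    (forall v, In v l <-> (fst s v /\ snd s v)).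

(* k ∈ ℕ ∪ {ℵ0}: Some m = m, None = ℵ0.  order(s) < k. *)
Definition order_lt_k (s : osep) (k : option nat) : Prop :=
  match k with
  | Some m => exists n, has_order s n /\ n < m
  | None => exists n, has_order s n
  end.

Definition osep_le (s t : osep) : Prop :=
  (forall v, fst s v -> fst t v) /\ (forall v, snd t v -> snd s v).

Definition osep_lt (s t : osep) : Prop := osep_le s t /\ s <> t.

Definition consistent (O : osep -> Prop) : Prop :=
  forall s t, O s -> O t -> ~ same_sep s t -> ~ osep_le (flip s) t.

Definition pre_tangle (P : osep -> Prop) : Prop :=
  consistent P /\
  exists k : option nat,
    (forall s, is_sep s -> order_lt_k s k ->
       (P s \/ P (flip s)) /\ (P s -> P (flip s) -> s = flip s)) /\
    (forall s, P s -> is_sep s /\ order_lt_k s k).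

Definition distinguishes (s : osep) (P Q : osep -> Prop) : Prop :=
  exists x y, same_sep s x /\ same_sep s y /\ P x /\ Q y /\ x <> y.

Definition eff_distinguishes (s : osep) (P Q : osep -> Prop) : Prop :=
  distinguishes s P Q /\
  forall t, is_sep t -> distinguishes t P Q -> order_le s t.

End Seps.

From Stdlib Require Import List Arith Lia Classical ClassicalEpsilon FunctionalExtensionality PropExtensionality ProofIrrelevance.
Set Implicit Arguments.

(** The pre-tangle [P i] contains [flip (s i)] and orients every separation of
    order at most [|s i|]; consistency together with [s i < s k] forces it to
    contain [flip (s k)] when [s k] has minimal order, and dually [P j] contains
    [s k].  If some [t] of smaller order distinguished [P i] and [P j], then,
    following the orientations of [t] along [P i, ..., P j], it would
    distinguish two consecutive [P l], [P (l+1)], contradicting the efficiency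
    of [s l], whose order is at least that of [s k]. *)

Section OrientedSeparations.
Variable V : Type.
Implicit Types (s t : osep V) (O : osep V -> Prop).

Lemma flip_flip s : flip (flip s) = s.
Proof. now destruct s. Qed.

Lemma osep_ext s t :
  (forall v, fst s v <-> fst t v) -> (forall v, snd s v <-> snd t v) -> s = t.
Proof.
  destruct s as [A B], t as [C D]; simpl; intros HAC HBD.
  f_equal; apply functional_extensionality; intro v;
    apply propositional_extensionality; auto.
Qed.

Lemma same_sep_flip t x y : same_sep t x -> same_sep t y -> x <> y -> y = flip x.
Proof.
  unfold same_sep; intros [-> | ->] [-> | ->] Hxy;
    congruence || now rewrite ?flip_flip.
Qed.

Lemma has_order_flip s n : has_order (flip s) n <-> has_order s n.
Proof.
  destruct s as [A B]; unfold has_order; simpl.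
  split; intros [l [Hl [Hn HI]]]; exists l; (split; [| split]); auto;
    intro v; rewrite HI; tauto.
Qed.

Lemma has_order_unique s a b : has_order s a -> has_order s b -> a = b.
Proof.
  intros [la [Hla [<- Ha]]] [lb [Hlb [<- Hb]]].
  apply Nat.le_antisymm; apply NoDup_incl_length; auto;
    intros v Hv; [apply Hb, Ha | apply Ha, Hb]; exact Hv.
Qed.

Lemma has_order_same_sep t x n : same_sep t x -> has_order x n -> has_order t n.
Proof. intros [-> | ->]; [auto | apply has_order_flip]. Qed.

Lemma has_order_le s t a b :
  order_le s t -> has_order s a -> has_order t b -> a <= b.
Proof.
  intros [f Hf] [ls [Hls [<- Hs]]] [lt [Hlt [<- Ht]]].
  set (g := fun v => match excluded_middle_informative (fst s v /\ snd s v) with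
                     | left h => proj1_sig (f (exist _ v h))
                     | right _ => v
                     end).
  assert (Hg : forall v (h : fst s v /\ snd s v), g v = proj1_sig (f (exist _ v h))).
  { intros v h; unfold g.
    destruct (excluded_middle_informative _) as [h' | h']; [| contradiction].
    now rewrite (proof_irrelevance _ h h'). }
  rewrite <- (length_map g ls).
  apply NoDup_incl_length.
  - apply NoDup_map_NoDup_ForallPairs; auto.
    intros v w Hv Hw; apply Hs in Hv, Hw.
    rewrite (Hg v Hv), (Hg w Hw); intro Hvw.
    assert (Hfvw : f (exist _ v Hv) = f (exist _ w Hw)).
    { destruct (f (exist _ v Hv)), (f (exist _ w Hw)); simpl in Hvw; subst.
      f_equal; apply proof_irrelevance. }
    exact (f_equal (@proj1_sig _ _) (Hf _ _ Hfvw)).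
  - intros w Hw; apply in_map_iff in Hw as [v [<- Hv]]; apply Hs in Hv.
    rewrite (Hg v Hv); apply Ht, proj2_sig.
Qed.

(* Each vertex of the separator of [s] is sent to the vertex at the same
   position in the enumeration of the separator of [t]. *)
Lemma order_le_of_has_order s t a b :
  has_order s a -> has_order t b -> a <= b -> order_le s t.
Proof.
  intros [ls [Hls [<- Hs]]] [lt [Hlt [<- Ht]]] Hab.
  assert (idx : forall v, In v ls -> {n | n < length ls /\ nth n ls v = v}).
  { intros v Hv; apply constructive_indefinite_description, In_nth, Hv. }
  set (pos := fun x : {v | fst s v /\ snd s v} =>
                proj1_sig (idx _ (proj2 (Hs _) (proj2_sig x)))).
  assert (Hpos : forall x, pos x < length ls /\ nth (pos x) ls (proj1_sig x) = proj1_sig x)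
    by (intro x; exact (proj2_sig (idx _ _))).
  assert (Himg : forall x, fst t (nth (pos x) lt (proj1_sig x)) /\
                           snd t (nth (pos x) lt (proj1_sig x))).
  { intro x; apply Ht, nth_In; specialize (Hpos x); lia. }
  exists (fun x => exist (fun v => fst t v /\ snd t v) _ (Himg x)).
  intros x y Hxy; apply (f_equal (@proj1_sig _ _)) in Hxy; simpl in Hxy.
  destruct (Hpos x) as [Hx Hnx], (Hpos y) as [Hy Hny].
  assert (Hpxy : pos x = pos y).
  { apply (proj1 (NoDup_nth lt (proj1_sig x)) Hlt); try lia.
    rewrite Hxy; apply nth_indep; lia. }
  destruct x as [v hv], y as [w hw]; simpl in *.
  assert (v = w) as <-.
  { rewrite <- Hnx, <- Hny, Hpxy; apply nth_indep; lia. }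
  f_equal; apply proof_irrelevance.
Qed.

(* With [A] the whole vertex set, [(A,B) < (A,D)] means [D] is a proper
   subset of [B], and the separators are [B] and [D]. *)
Lemma has_order_lt_of_full_lt s t a b :
  (forall v, fst s v) -> osep_lt s t -> has_order s a -> has_order t b -> b < a.
Proof.
  intros Hfull [[Hfst Hsnd] Hst] [ls [Hls [<- Hs]]] [lt [Hlt [<- Ht]]].
  assert (Hv : exists v, snd s v /\ ~ snd t v).
  { apply NNPP; intro Hno; apply Hst, osep_ext.
    - intro v; split; auto.
    - intro v; split; auto; intro Hv; apply NNPP; intro Hnv; eauto. }
  destruct Hv as [v [Hsv Htv]].
  change (length (v :: lt) <= length ls).
  apply NoDup_incl_length.
  - constructor; auto; intro Hin; apply Ht in Hin; tauto.
  - intros w [<- | Hw]; apply Hs; auto.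
    apply Ht in Hw as [_ Hw]; auto.
Qed.

Lemma consistent_lt_flip O a b :
  consistent O -> osep_lt a b -> b <> flip a -> O b -> ~ O (flip a).
Proof.
  intros HO [[Hfst Hsnd] Hab] Hba Hb Ha.
  apply (HO b (flip a) Hb Ha).
  - intros [Heq | Heq]; [now apply Hba | apply Hab].
    now rewrite <- (flip_flip a), Heq, flip_flip.
  - split; simpl; auto.
Qed.

Lemma distinguishes_neq_flip t (P Q : osep V -> Prop) :
  distinguishes t P Q -> t <> flip t.
Proof.
  intros [x [y [Hx [Hy [_ [_ Hxy]]]]]] Ht; apply Hxy.
  unfold same_sep in Hx, Hy; rewrite <- Ht in Hx, Hy; intuition congruence.
Qed.

Lemma distinguishes_consecutive (Q : nat -> osep V -> Prop) t x i j :
  i <= j -> same_sep t x -> Q i x ->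
  (forall l, i < l <= j -> exists z, same_sep t z /\ Q l z) ->
  Q j x \/ exists l, i <= l < j /\ distinguishes t (Q l) (Q (S l)).
Proof.
  intros Hij Hx Hix Horient; induction j as [| j IH].
  - replace i with 0 in Hix by lia; auto.
  - destruct (Nat.eq_dec i (S j)) as [<- | Hne]; [auto |].
    destruct IH as [Hjx | [l [Hl Hd]]]; [lia | intros l Hl; apply Horient; lia | |].
    + destruct (Horient (S j)) as [z [Hz HQz]]; [lia |].
      destruct (classic (z = x)) as [-> | Hzx]; [auto |].
      right; exists j; split; [lia |].
      exists x, z; repeat split; auto.
    + right; exists l; split; [lia | auto].
Qed.

End OrientedSeparations.

Section PreTangles.
Variables (V : Type) (E : V -> V -> Prop) (P : osep V -> Prop).
Hypothesis HP : pre_tangle E P.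

Lemma pre_tangle_has_order {u} : P u -> exists n, has_order u n.
Proof.
  destruct HP as [_ [[m |] [_ Hk]]]; intro Hu; destruct (Hk u Hu) as [_ Ho];
    simpl in Ho; [destruct Ho as [n [Hn _]] |]; eauto.
Qed.

Lemma pre_tangle_orients {u t a b} :
  P u -> has_order u a -> is_sep E t -> has_order t b -> b <= a ->
  P t \/ P (flip t).
Proof.
  destruct HP as [_ [k [Hk1 Hk2]]]; intros Hu Ha Ht Hb Hba.
  apply Hk1; auto.
  destruct (Hk2 u Hu) as [_ Ho]; destruct k as [m |]; simpl in *; eauto.
  destruct Ho as [n [Hn Hnm]].
  rewrite (has_order_unique Hn Ha) in Hnm.
  exists b; split; auto; lia.
Qed.

Lemma pre_tangle_degenerate {u} : P u -> P (flip u) -> u = flip u.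
Proof.
  destruct HP as [_ [k [Hk1 Hk2]]]; intros Hu Hfu.
  destruct (Hk2 u Hu); now apply (Hk1 u).
Qed.

End PreTangles.

Section IncreasingChains.
Variables (V : Type) (s : nat -> osep V).
Hypothesis s_increasing : forall i j, i < j -> osep_lt (s i) (s j).
Hypothesis s_finite : forall l, exists n, has_order (s l) n.

(* A full side [A] would persist along the chain while the separators
   strictly shrink, which is impossible for finite separators. *)
Lemma chain_no_full_side l : ~ (forall v, fst (s l) v).
Proof.
  intro Hfull.
  assert (Hfull_up : forall q v, fst (s (l + q)) v).
  { intros [| q] v; [now rewrite Nat.add_0_r |].
    destruct (s_increasing (i := l) (j := l + S q) ltac:(lia)) as [[Hfst _] _].
    apply Hfst, Hfull. }
  destruct (s_finite l) as [n0 Hn0].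
  assert (Hshrink : forall q m, has_order (s (l + q)) m -> m + q <= n0).
  { induction q as [| q IH]; intros m Hm.
    - rewrite Nat.add_0_r in Hm; rewrite (has_order_unique Hm Hn0); lia.
    - destruct (s_finite (l + q)) as [m' Hm'].
      rewrite Nat.add_succ_r in Hm.
      pose proof (has_order_lt_of_full_lt (Hfull_up q)
                    (s_increasing (i := l + q) (j := S (l + q)) ltac:(lia)) Hm' Hm).
      specialize (IH m' Hm'); lia. }
  destruct (s_finite (l + S n0)) as [m Hm].
  specialize (Hshrink _ _ Hm); lia.
Qed.

Lemma chain_flip_neq (E : V -> V -> Prop) i j :
  is_sep E (s i) -> i < j -> s j <> flip (s i).
Proof.
  intros [Hcover _] Hij Hji.
  apply (chain_no_full_side j); intro v.
  destruct (s_increasing Hij) as [[Hfst _] _].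
  rewrite Hji in Hfst |- *; simpl in *.
  destruct (Hcover v); auto.
Qed.

End IncreasingChains.

Section Interlacing.
Variables (V : Type) (E : V -> V -> Prop) (s : nat -> osep V) (P : nat -> (osep V -> Prop)).
Hypothesis s_sep : forall i, is_sep E (s i).
Hypothesis s_increasing : forall i j, i < j -> osep_lt (s i) (s j).
Hypothesis P_pre_tangle : forall i, pre_tangle E (P i).
Hypothesis IM1 : forall i, P i (flip (s i)) /\ P (S i) (s i).
Hypothesis IM2' : forall i, eff_distinguishes E (s i) (P i) (P (S i)).

Lemma has_order_s l : exists n, has_order (s l) n.
Proof.
  destruct (pre_tangle_has_order (P_pre_tangle l) (proj1 (IM1 l))) as [n Hn].
  exists n; apply has_order_flip, Hn.
Qed.

Lemma s_neq_flip l : s l <> flip (s l).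
Proof. exact (distinguishes_neq_flip (proj1 (IM2' l))). Qed.

Lemma P_contains_flip_s i k : i <= k -> order_le (s k) (s i) -> P i (flip (s k)).
Proof.
  intros Hik Hki.
  destruct (has_order_s i) as [ni Hni], (has_order_s k) as [nk Hnk].
  destruct (pre_tangle_orients (P_pre_tangle i) (proj1 (IM1 i))
              (proj2 (has_order_flip _ _) Hni) (s_sep k) Hnk
              (has_order_le Hki Hnk Hni)) as [Hk | Hk]; [exfalso | exact Hk].
  destruct (Nat.eq_dec i k) as [<- | Hne].
  - exact (s_neq_flip (pre_tangle_degenerate (P_pre_tangle i) Hk (proj1 (IM1 i)))).
  - apply (consistent_lt_flip (proj1 (P_pre_tangle i))
             (s_increasing (i := i) (j := k) ltac:(lia))
             (chain_flip_neq s s_increasing has_order_s (j := k) (s_sep i) ltac:(lia)) Hk).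
    exact (proj1 (IM1 i)).
Qed.

Lemma P_succ_contains_s k m : k <= m -> order_le (s k) (s m) -> P (S m) (s k).
Proof.
  intros Hkm Hkm'.
  destruct (has_order_s m) as [nm Hnm], (has_order_s k) as [nk Hnk].
  destruct (pre_tangle_orients (P_pre_tangle (S m)) (proj2 (IM1 m)) Hnm
              (s_sep k) Hnk (has_order_le Hkm' Hnk Hnm)) as [Hk | Hk]; [exact Hk | exfalso].
  destruct (Nat.eq_dec k m) as [<- | Hne].
  - exact (s_neq_flip (pre_tangle_degenerate (P_pre_tangle (S k)) (proj2 (IM1 k)) Hk)).
  - apply (consistent_lt_flip (proj1 (P_pre_tangle (S m)))
             (s_increasing (i := k) (j := m) ltac:(lia))
             (chain_flip_neq s s_increasing has_order_s (j := m) (s_sep k) ltac:(lia))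
             (proj2 (IM1 m)) Hk).
Qed.

Lemma order_le_of_distinguishes i j k t :
  i <= k < j -> (forall l, i <= l < j -> order_le (s k) (s l)) ->
  is_sep E t -> distinguishes t (P i) (P j) -> order_le (s k) t.
Proof.
  intros Hk Hmin Ht [x [y [Hx [Hy [Px [Py Hxy]]]]]].
  destruct (has_order_s k) as [nk Hnk].
  destruct (pre_tangle_has_order (P_pre_tangle i) Px) as [nt Hnt].
  apply (has_order_same_sep Hx) in Hnt.
  destruct (le_lt_dec nk nt) as [Hle | Hlt];
    [exact (order_le_of_has_order Hnk Hnt Hle) | exfalso].
  assert (Horient : forall l, i < l <= j -> exists z, same_sep t z /\ P l z).
  { intros [| l] Hl; [lia |].
    destruct (has_order_s l) as [nl Hnl].
    pose proof (has_order_le (Hmin l ltac:(lia)) Hnk Hnl).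
    destruct (pre_tangle_orients (P_pre_tangle (S l)) (proj2 (IM1 l)) Hnl Ht Hnt
                ltac:(lia)) as [Hz | Hz];
      eexists; split; try exact Hz; [left | right]; reflexivity. }
  destruct (@distinguishes_consecutive _ P t x i j ltac:(lia) Hx Px Horient)
    as [Pjx | [l [Hl Hd]]].
  - pose proof (same_sep_flip Hx Hy Hxy) as ->.
    apply Hxy; exact (pre_tangle_degenerate (P_pre_tangle j) Pjx Py).
  - destruct (has_order_s l) as [nl Hnl].
    pose proof (has_order_le (proj2 (IM2' l) t Ht Hd) Hnl Hnt).
    pose proof (has_order_le (Hmin l Hl) Hnk Hnl).
    lia.
Qed.

End Interlacing.

Theorem mainTheorem13 (V : Type) (E : V -> V -> Prop)
  (Esym : forall u v, E u v -> E v u) (Eirr : forall v, ~ E v v)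
  (s : nat -> osep V) (P : nat -> (osep V -> Prop))
  (Hsep : forall i, is_sep E (s i))
  (Hinc : forall i j, i < j -> osep_lt (s i) (s j))
  (Hpt : forall i, pre_tangle E (P i))
  (IM1 : forall i, P i (flip (s i)) /\ P (S i) (s i))
  (IM2' : forall i, eff_distinguishes E (s i) (P i) (P (S i))) :
  forall i j, i < j ->
    forall k, i <= k < j ->
      (forall l, i <= l < j -> order_le (s k) (s l)) ->
      eff_distinguishes E (s k) (P i) (P j).
Proof.
  intros i j Hij k Hk Hmin.
  destruct j as [| m]; [lia |].
  split.
  - exists (flip (s k)), (s k); repeat split.
    + now right.
    + now left.
    + apply (P_contains_flip_s s P Hsep Hinc Hpt IM1 IM2'); [lia | apply Hmin; lia].
    + apply (P_succ_contains_s s P Hsep Hinc Hpt IM1 IM2'); [lia | apply Hmin; lia].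
    + intro Hfk; apply (s_neq_flip s P IM2' k); now rewrite <- Hfk, flip_flip.
  - intros t Ht Hd; exact (order_le_of_distinguishes s P Hpt IM1 IM2' Hk Hmin Ht Hd).
Qed.
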